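(* There is a constant $c_1>0$ such that for all $n>5$, $$h_3(n,\{(4,0),(4,2)\}) > c_1\, n^{1/5}.$$ That is, every $n$-vertex $3$-graph in which every four vertices span $1$, $3$ or $4$ edges has a clique or coclique of size greater than $c_1 n^{1/5}$.
   Context: For an $r$-uniform hypergraph ($r$-graph) $H$, a homogeneous set is a set of vertices that is either a clique (every $r$-subset is an edge) or a coclique (no $r$-subset is an edge); $h(H)$ denotes the size of a largest homogeneous set. An $(m,f)$-graph is an $r$-graph with $m$ vertices and $f$ edges; $H$ is $(m,f)$-free if it contains no induced sub-hypergraph that is an $(m,f)$-graph. For a set $Q$ of pairs $(m,f)$, $H$ is $Q$-free if it is $(m,f)$-free for every $(m,f)\in Q$. $h_r(n,Q)$ is the minimum of $h(H)$ over all $n$-vertex $Q$-free $r$-graphs $H$. *)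

From mathcomp Require Import all_boot.
From Stdlib Require Import Reals.

Set Implicit Arguments.
Unset Strict Implicit.
Unset Printing Implicit Defensive.

Section Hyper.
Variable T : finType.

Definition is_rgraph (r : nat) (E : {set {set T}}) : bool :=
  [forall e in E, #|e| == r].

Definition is_clique (r : nat) (E : {set {set T}}) (S : {set T}) : bool :=
  [forall e : {set T}, ((e \subset S) && (#|e| == r)) ==> (e \in E)].

Definition is_coclique (r : nat) (E : {set {set T}}) (S : {set T}) : bool :=
  [forall e : {set T}, ((e \subset S) && (#|e| == r)) ==> (e \notin E)].

Definition homogeneous (r : nat) (E : {set {set T}}) (S : {set T}) : bool :=
  is_clique r E S || is_coclique r E S.

Definition hom_number (r : nat) (E : {set {set T}}) : nat :=
  \max_(S : {set T} | homogeneous r E S) #|S|.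

Definition induced_edges (E : {set {set T}}) (X : {set T}) : nat :=
  #|[set e in E | e \subset X]|.

Definition mf_free (E : {set {set T}}) (m f : nat) : bool :=
  [forall X : {set T}, (#|X| == m) ==> (induced_edges E X != f)].

Definition Q_free (E : {set {set T}}) (Q : seq (nat * nat)) : bool :=
  all (fun p => mf_free E p.1 p.2) Q.

End Hyper.

(* h_r(n,Q): minimum of h(H) over all Q-free r-graphs H on the n vertices 'I_n.
   (Default value n if there is no such r-graph; irrelevant below since the
   complete r-graph is {(4,0),(4,2)}-free.) *)
Definition h_rnQ (r n : nat) (Q : seq (nat * nat)) : nat :=
  \big[minn/n]_(E : {set {set 'I_n}} | is_rgraph r E && Q_free E Q)
     hom_number r E.

From mathcomp Require Import all_boot.
From Stdlib Require Import Reals Lra.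
(* ssrnat again, so that its notations on nat take precedence over Reals'. *)
From mathcomp Require Import ssrnat zify.

(* For two vertices v <> x, let [nonedge_nbhd v x] be the set of the vertices z
   outside {v, x} such that {v, x, z} is not an edge.
   1. Each [nonedge_nbhd v x] is a clique: for a, b, c in it, counting the edges
      of the five 4-sets inside {v, x, a, b, c} modulo 2 forces {a, b, c} in E.
   2. If all these sets have fewer than k vertices, a clique S can be extended
      by any vertex outside S and outside every [nonedge_nbhd a b], a, b in S;
      these cover fewer than k^3 vertices, so a clique of size k is built greedily.
   Hence a 3-graph with at least k^3 vertices has a homogeneous set of size k,
   i.e. h_3(n, {(4,0),(4,2)}) >= floor(n^(1/3)) >= floor(n^(1/5)).  Finally,
   with k = floor(n^(1/5)) >= 1 we get n^(1/5) < k + 1 <= 2k, so c1 = 1/2 works. *)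

Section RGraph.
Variables (T : finType) (r : nat) (E : {set {set T}}).
Hypothesis rgraphE : is_rgraph r E.

Lemma edge_card (e : {set T}) : e \in E -> #|e| = r.
Proof. by move=> eE; move/forall_inP: rgraphE => /(_ e eE) /eqP. Qed.

Lemma induced_edges_succ (X : {set T}) : #|X| = r.+1 ->
  induced_edges E X = \sum_(y in X) (X :\ y \in E).
Proof.
move=> cardX; rewrite /induced_edges.
have -> : [set e in E | e \subset X] = (fun y => X :\ y) @: [set y in X | X :\ y \in E].
  apply/setP => e; rewrite inE; apply/andP/imsetP => [[eE eX] | [y]].
  - have /cards1P [y Xe] : #|X :\: e| == 1.
      by rewrite cardsD (setIidPr eX) (edge_card _ eE) cardX subSnn.
    have def_e : e = X :\ y by rewrite -Xe setDDr setDv set0U (setIidPr eX).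
    have : y \in X :\: e by rewrite Xe set11.
    by rewrite inE => /andP [_ yX]; exists y; rewrite // inE yX -def_e.
  - by rewrite inE => /andP [_ XyE] ->; rewrite XyE subD1set.
rewrite card_in_imset; last first.
  move=> y z; rewrite !inE => /andP [yX _] /andP [zX _] eqXyz.
  apply/eqP; apply: contraT => yz.
  have : y \in X :\ z by rewrite !inE yz.
  by rewrite -eqXyz !inE eqxx.
rewrite -sum1_card big_mkcond [RHS]big_mkcond /=.
by apply: eq_bigr => y _; rewrite inE; case: (y \in X); case: (X :\ y \in E).
Qed.

End RGraph.

Lemma card_bigcup_le {T I : finType} (A : {pred I}) (F : I -> {set T}) :
  #|\bigcup_(i in A) F i| <= \sum_(i in A) #|F i|.
Proof.
elim/big_rec2: _ => [|i X n _ IH]; first by rewrite cards0.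
by apply: leq_trans (leq_add (leqnn _) IH); rewrite cardsU leq_subr.
Qed.

Ltac vertex_cases := repeat (case: eqP => ?; subst); first [done | congruence].

Section ThreeGraph.
Variables (T : finType) (E : {set {set T}}).
Hypothesis graphE : is_rgraph 3 E.
Hypothesis freeE : Q_free E [:: (4, 0); (4, 2)].

Definition edge3 (a b c : T) : bool := [set a; b; c] \in E.

Lemma edge3_rot a b c : edge3 a b c = edge3 b c a.
Proof. by rewrite /edge3; congr (_ \in E); apply/setP => z; rewrite !inE; vertex_cases. Qed.

Lemma edge3_swap a b c : edge3 a b c = edge3 b a c.
Proof. by rewrite /edge3; congr (_ \in E); apply/setP => z; rewrite !inE; vertex_cases. Qed.

Lemma card3_triple (e : {set T}) : #|e| = 3 ->
  exists a b c, [/\ a <> b, a <> c, b <> c & e = [set a; b; c]].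
Proof.
move=> cardE; have /card_gt0P [a ea] : 0 < #|e| by rewrite cardE.
have /cards2P [b [c [/eqP bc def_ea]]] : #|e :\ a| == 2.
  by move: cardE; rewrite (cardsD1 a e) ea add1n => -[->].
have : (b \in e :\ a) && (c \in e :\ a) by rewrite def_ea !inE !eqxx orbT.
rewrite !inE => /andP [/andP [/eqP ba _] /andP [/eqP ca _]].
exists a, b, c; split; try by move=> ?; subst.
rewrite -(setD1K ea) def_ea; apply/setP => z; rewrite !inE; vertex_cases.
Qed.

Lemma sum_over4 (F : T -> nat) (a b c d : T) :
  a <> b -> a <> c -> a <> d -> b <> c -> b <> d -> c <> d ->
  \sum_(y in [set a; b; c; d]) F y = F a + F b + F c + F d.
Proof.
move=> *.
have -> : [set a; b; c; d] = a |: (b |: (c |: [set d])).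
  by apply/setP => z; rewrite !inE; vertex_cases.
rewrite big_setU1 /=; last by rewrite !inE; vertex_cases.
rewrite big_setU1 /=; last by rewrite !inE; vertex_cases.
by rewrite big_setU1 /= ?big_set1 ?addnA // !inE; vertex_cases.
Qed.

Definition edges4 (a b c d : T) : nat :=
  edge3 b c d + edge3 a c d + edge3 a b d + edge3 a b c.

Lemma four_vertices (a b c d : T) :
  a <> b -> a <> c -> a <> d -> b <> c -> b <> d -> c <> d ->
  edges4 a b c d != 0 /\ edges4 a b c d != 2.
Proof.
move=> *; set X := [set a; b; c; d].
have cardX : #|X| = 4 by rewrite -sum1_card sum_over4.
have count4 : induced_edges E X = edges4 a b c d.
  rewrite (@induced_edges_succ _ _ _ graphE) // sum_over4 //.
  have -> : X :\ a = [set b; c; d] by apply/setP => z; rewrite !inE; vertex_cases.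
  have -> : X :\ b = [set a; c; d] by apply/setP => z; rewrite !inE; vertex_cases.
  have -> : X :\ c = [set a; b; d] by apply/setP => z; rewrite !inE; vertex_cases.
  by have -> : X :\ d = [set a; b; c] by apply/setP => z; rewrite !inE; vertex_cases.
move: freeE; rewrite /Q_free /= => /and3P [free0 free2 _].
move: (forallP free0 X) (forallP free2 X); rewrite cardX count4 /=.
by move=> ? ?; split.
Qed.

(* On
   {v, x, a, b} exactly one of vab, xab is an edge, and similarly for the pairs
   ac and bc; so the edge counts of {v, a, b, c} and {x, a, b, c} add up to
   3 + 2 [abc], which is only possible with two odd counts if abc is an edge. *)
Lemma nonedges_force_edge (v x a b c : T) :
  v <> x -> v <> a -> v <> b -> v <> c -> x <> a -> x <> b -> x <> c ->
  a <> b -> a <> c -> b <> c ->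
  ~~ edge3 v x a -> ~~ edge3 v x b -> ~~ edge3 v x c -> edge3 a b c.
Proof.
move=> *.
have [n1 n1'] : edges4 v x a b != 0 /\ edges4 v x a b != 2 by apply: four_vertices.
have [n2 n2'] : edges4 v x a c != 0 /\ edges4 v x a c != 2 by apply: four_vertices.
have [n3 n3'] : edges4 v x b c != 0 /\ edges4 v x b c != 2 by apply: four_vertices.
have [n4 n4'] : edges4 v a b c != 0 /\ edges4 v a b c != 2 by apply: four_vertices.
have [n5 n5'] : edges4 x a b c != 0 /\ edges4 x a b c != 2 by apply: four_vertices.
move: n1 n1' n2 n2' n3 n3' n4 n4' n5 n5'; rewrite /edges4.
repeat match goal with H : is_true (~~ edge3 _ _ _) |- _ => rewrite (negbTE H); clear H end.
by case: (edge3 x a b); case: (edge3 v a b); case: (edge3 x a c); case: (edge3 v a c);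
   case: (edge3 x b c); case: (edge3 v b c); case: (edge3 a b c).
Qed.

Definition nonedge_nbhd (v x : T) : {set T} :=
  [set z | [&& v != x, z != v, z != x & ~~ edge3 v x z]].

Lemma clique_nonedge_nbhd (v x : T) : is_clique 3 E (nonedge_nbhd v x).
Proof.
apply/forallP => e; apply/implyP => /andP [eN /eqP /card3_triple].
move=> [a [b [c [ab ac bc def_e]]]]; rewrite def_e in eN *.
have /and3P [] : [&& a \in nonedge_nbhd v x, b \in nonedge_nbhd v x
                  & c \in nonedge_nbhd v x].
  by rewrite !(subsetP eN) // !inE eqxx ?orbT.
rewrite !inE => /and4P [/eqP vx /eqP av /eqP ax na] /and4P [_ /eqP bv /eqP bx nb].
move=> /and4P [_ /eqP cv /eqP cx nc].
by apply: (@nonedges_force_edge v x) => // eq; subst.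
Qed.

Lemma clique_extend (S : {set T}) (u : T) : is_clique 3 E S -> u \notin S ->
  (forall a b, a \in S -> b \in S -> a <> b -> edge3 a b u) -> is_clique 3 E (u |: S).
Proof.
move=> cliqueS uS edge_u; apply/forallP => e; apply/implyP => /andP [eS /eqP card_e].
have [a [b [c [ab ac bc def_e]]]] := card3_triple _ card_e.
rewrite def_e in eS card_e *.
have /and3P [] : [&& a \in u |: S, b \in u |: S & c \in u |: S].
  by rewrite !(subsetP eS) // !inE eqxx ?orbT.
rewrite -[_ \in E]/(edge3 a b c) !inE.
move=> /orP [/eqP ? | aS] /orP [/eqP ? | bS] /orP [/eqP ? | cS]; subst; try congruence.
- by rewrite edge3_rot; apply: edge_u.
- by rewrite -edge3_rot edge3_swap; apply: edge_u.
- exact: edge_u.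
- apply: (implyP (forallP cliqueS [set a; b; c])); rewrite card_e eqxx andbT.
  by apply/subsetP => z; rewrite !inE => /orP [/orP [] | ] /eqP ->.
Qed.

Definition blocked (S : {set T}) : {set T} :=
  S :|: \bigcup_(a in S) \bigcup_(b in S) nonedge_nbhd a b.

Lemma clique_extend_unblocked (S : {set T}) (u : T) :
  is_clique 3 E S -> u \notin blocked S -> is_clique 3 E (u |: S).
Proof.
move=> cliqueS; rewrite /blocked in_setU negb_or => /andP [uS uN].
apply: clique_extend => // a b aS bS /eqP ab.
have : u \notin nonedge_nbhd a b.
  by apply: contra uN => uab; apply/bigcupP; exists a => //; apply/bigcupP; exists b.
have [ua ub] : u != a /\ u != b by split; apply: contraNneq uS => ->.
by rewrite inE ab ua ub negbK.
Qed.

Lemma card_blocked (S : {set T}) (k : nat) :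
  (forall v x, #|nonedge_nbhd v x| < k) ->
  #|blocked S| <= #|S| + #|S| * (#|S| * k.-1).
Proof.
move=> small; rewrite cardsU; apply: leq_trans (leq_subr _ _) _.
rewrite leq_add2l; apply: leq_trans (card_bigcup_le _ _) _.
rewrite -sum_nat_const; apply: leq_sum => a _.
apply: leq_trans (card_bigcup_le _ _) _.
rewrite -sum_nat_const; apply: leq_sum => b _.
by have := small a b; case: (k).
Qed.

Lemma greedy_clique (k : nat) : (forall v x, #|nonedge_nbhd v x| < k) ->
  k ^ 3 <= #|T| -> forall j, j <= k -> exists S, is_clique 3 E S /\ #|S| = j.
Proof.
move=> small bigT; elim=> [|j IH] jk.
  exists set0; rewrite cards0; split=> //.
  by apply/forallP => e; rewrite subset0; apply/implyP => /andP [/eqP -> ]; rewrite cards0.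
have [S [cliqueS cardS]] := IH (ltnW jk).
have few_blocked : #|blocked S| < #|T|.
  apply: leq_ltn_trans (card_blocked S k small) _; apply: leq_trans bigT.
  rewrite cardS; case: k jk {small IH} => // k jk /=.
  apply: (@leq_ltn_trans (k + k * (k * k))); first by rewrite leq_add ?leq_mul.
  rewrite !expnS expn0 muln1; nia.
have [u u_unblocked] : exists u, u \notin blocked S.
  apply/existsP; apply: contraLR few_blocked => /existsPn all_blocked.
  rewrite -leqNgt subset_leq_card //; apply/subsetP => z _.
  by move: (all_blocked z); rewrite negbK.
exists (u |: S); split; first exact: clique_extend_unblocked.
by move: u_unblocked; rewrite cardsU1 /blocked in_setU negb_or cardS => /andP [-> _].
Qed.

Theorem large_homogeneous (k : nat) : k ^ 3 <= #|T| ->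
  exists S, homogeneous 3 E S /\ k <= #|S|.
Proof.
move=> bigT; case: (boolP [exists v, exists x, k <= #|nonedge_nbhd v x|]).
  move=> /existsP [v /existsP [x big_nbhd]]; exists (nonedge_nbhd v x).
  by rewrite /homogeneous clique_nonedge_nbhd.
move=> /existsPn no_big; have small : forall v x, #|nonedge_nbhd v x| < k.
  by move=> v x; move/existsPn: (no_big v) => /(_ x); rewrite -ltnNge.
have [S [cliqueS cardS]] := greedy_clique k small bigT k (leqnn k).
by exists S; rewrite /homogeneous cliqueS cardS.
Qed.

End ThreeGraph.

Lemma h_rnQ_ge (n k : nat) : k ^ 3 <= n -> k <= n ->
  k <= h_rnQ 3 n [:: (4, 0); (4, 2)].
Proof.
move=> k3n kn; rewrite /h_rnQ; elim/big_ind: _ => // [x y kx ky | E /andP [graphE freeE]].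
  by rewrite leq_min kx ky.
have [|S [homS kS]] := @large_homogeneous _ E graphE freeE k; first by rewrite card_ord.
apply: leq_trans kS _; rewrite /hom_number.
exact: (@leq_bigmax_cond _ (fun S => homogeneous 3 E S) (fun S => #|S|) S homS).
Qed.

Lemma int_root (e n : nat) : 0 < e -> exists k, k ^ e <= n < k.+1 ^ e.
Proof.
move=> e_gt0; elim: n => [|n [k /andP [lo hi]]]; first by exists 0; rewrite exp1n exp0n.
case: (ltnP n.+1 (k.+1 ^ e)) => [hi' | lo']; first by exists k; rewrite hi' leqW.
have -> : n.+1 = k.+1 ^ e by apply/eqP; rewrite eqn_leq lo' hi.
by exists k.+1; rewrite leqnn /= ltn_exp2r.
Qed.

Lemma INR_expn (m e : nat) : INR (m ^ e) = (INR m ^ e)%R.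
Proof. by elim: e => [|e IH]; rewrite ?expn0 // expnS -multE mult_INR IH. Qed.

Lemma Rpower_root_lt (n m e : nat) : (0 < n)%N -> (0 < e)%N -> n < m ^ e ->
  (Rpower (INR n) (1 / INR e) < INR m)%R.
Proof.
move=> n_gt0 e_gt0 nm.
have m_gt0 : (0 < INR m)%R.
  by apply: lt_0_INR; apply/ltP; case: m nm => //; rewrite exp0n.
have e_pos : (0 < INR e)%R by apply: lt_0_INR; apply/ltP.
have root_m : Rpower (INR m ^ e) (1 / INR e) = INR m.
  rewrite -Rpower_pow // Rpower_mult.
  replace (INR e * (1 / INR e))%R with 1%R by (field; lra).
  exact: Rpower_1.
rewrite -root_m -INR_expn.
apply: Rlt_Rpower_l; first by apply: Rdiv_lt_0_compat; lra.
by split; [apply: lt_0_INR | apply: lt_INR]; apply/ltP.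
Qed.

Theorem mainTheorem4 :
  exists c1 : R, (0 < c1)%R /\
    forall n : nat, (5 < n)%nat ->
      (c1 * Rpower (INR n) (1 / 5) < INR (h_rnQ 3 n [:: (4%nat, 0%nat); (4%nat, 2%nat)]))%R.
Proof.
exists (1 / 2)%R; split; first lra.
move=> n n_gt5; have n_gt0 : 0 < n by apply: leq_trans n_gt5.
have [k /andP [k5n nk5]] := @int_root 5 n isT.
have k_gt0 : 0 < k by case: k k5n nk5 => // _; rewrite exp1n; lia.
have k3n : k ^ 3 <= n by apply: leq_trans k5n; rewrite leq_pexp2l.
have kn : k <= n by apply: leq_trans k3n; rewrite -{1}(expn1 k) leq_pexp2l.
have /leP/le_INR k_le_h := @h_rnQ_ge n k k3n kn.
have k_ge1 : (1 <= INR k)%R by apply: (le_INR 1); apply/leP.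
have root_lt := @Rpower_root_lt n k.+1 5 n_gt0 isT nk5.
have five : INR 5 = 5%R by rewrite /=; ring.
rewrite five S_INR in root_lt; lra.
Qed.
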